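(* Let $\mathcal{X}$ be a finite set, $\pi$ a probability mass function on $\mathcal{X}$ with full support, and let a group $\mathcal{G}$ act on $\mathcal{X}$ with orbits $(\mathcal{O}_i)_{i=1}^k$ and Gibbs, Metropolis–Hastings and Barker orbit kernels $G$, $M$, $B$. Let $\mathbf{G}=\{Q\in\mathcal{S}(\pi):GQG=Q\}$. For every $P\in\mathcal{S}(\pi)$ and $Q\in\mathbf{G}$, $$D^\pi_{KL}(P\|Q)=D^\pi_{KL}(P\|GPG)+D^\pi_{KL}(GPG\|Q).$$ In particular $GPG$ is the unique projection of $P$ onto $\mathbf{G}$ under KL divergence: $D^\pi_{KL}(P\|GPG)=\min_{Q\in\mathbf{G}}D^\pi_{KL}(P\|Q)$. Moreover, for all $Q\in\mathbf{G}$, $D^\pi_{KL}(MPM\|Q)=D^\pi_{KL}(MPM\|GPG)+D^\pi_{KL}(GPG\|Q)$ and $D^\pi_{KL}(BPB\|Q)=D^\pi_{KL}(BPB\|GPG)+D^\pi_{KL}(GPG\|Q)$, so $GPG$ is also the unique KL projection of $MPM$ and of $BPB$ onto $\mathbf{G}$. Taking $Q=\Pi$: $D^\pi_{KL}(P\|\Pi)\ge D^\pi_{KL}(GPG\|\Pi)$, $D^\pi_{KL}(MPM\|\Pi)\ge D^\pi_{KL}(GPG\|\Pi)$ and $D^\pi_{KL}(BPB\|\Pi)\ge D^\pi_{KL}(GPG\|\Pi)$.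
   Context: $\mathcal{S}(\pi)$ is the set of transition matrices $P$ with $\pi P=\pi$; $\Pi$ is the matrix all of whose rows equal $\pi$. For transition matrices $P,Q$, $D^\pi_{KL}(P\|Q)=\sum_{x,y}\pi(x)P(x,y)\log\frac{P(x,y)}{Q(x,y)}$ with convention $0\log(0/a)=0$. With $\mathcal{O}(x)$ the orbit of $x$: $G(x,y)=\pi(y)/\pi(\mathcal{O}(x))$ for $y\in\mathcal{O}(x)$, else $0$; $M(x,y)=\frac{1}{|\mathcal{O}(x)|-1}\min\{1,\pi(y)/\pi(x)\}$ for $y\in\mathcal{O}(x)\setminus\{x\}$, $0$ off the orbit, $M(x,x)=1-\sum_{y\ne x}M(x,y)$; $B$ is the same with acceptance $\pi(y)/(\pi(x)+\pi(y))$. *)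

From HB Require Import structures.
From mathcomp Require Import all_boot all_order all_algebra all_fingroup.
From mathcomp Require Import reals ereal exp.
Set Implicit Arguments. Unset Strict Implicit. Unset Printing Implicit Defensive.
Import Order.TTheory GRing.Theory Num.Theory.
Local Open Scope ring_scope.

Definition kmul (R : realType) (X : finType) (P Q : X -> X -> R) : X -> X -> R :=
  fun x y => \sum_(z : X) P x z * Q z y.

Definition is_transition (R : realType) (X : finType) (P : X -> X -> R) : Prop :=
  (forall x y, 0 <= P x y) /\ (forall x, \sum_(y : X) P x y = 1).

Definition in_S (R : realType) (X : finType) (pi : X -> R) (P : X -> X -> R) : Prop :=
  is_transition P /\ (forall y, \sum_(x : X) pi x * P x y = pi y).

Definition PiK (R : realType) (X : finType) (pi : X -> R) : X -> X -> R :=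
  fun _ y => pi y.

(* pointwise term of the KL divergence; convention 0 log(0/a) = 0, and
   a positive entry against a zero entry contributes +oo *)
Definition kl_term (R : realType) (p q w : R) : \bar R :=
  if p == 0 then 0%E
  else if q == 0 then +oo%E
  else (w * p * ln (p / q))%:E.

Definition KL (R : realType) (X : finType) (pi : X -> R) (P Q : X -> X -> R) : \bar R :=
  (\sum_(x : X) \sum_(y : X) kl_term (P x y) (Q x y) (pi x))%E.

Definition pimass (R : realType) (X : finType) (pi : X -> R) (A : {set X}) : R :=
  \sum_(y in A) pi y.

(* Orbit kernels, for an orbit map O : X -> {set X} (O x = orbit of x). *)
Definition GibbsK (R : realType) (X : finType) (pi : X -> R) (O : X -> {set X})
  : X -> X -> R :=
  fun x y => if y \in O x then pi y / pimass pi (O x) else 0.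

Definition orbit_off (R : realType) (X : finType) (acc : X -> X -> R)
  (O : X -> {set X}) (x y : X) : R :=
  if (y \in O x) && (y != x) then (#|O x|.-1)%:R^-1 * acc x y else 0.

Definition orbitK (R : realType) (X : finType) (acc : X -> X -> R)
  (O : X -> {set X}) : X -> X -> R :=
  fun x y => if y == x then 1 - \sum_(z : X | z != x) orbit_off acc O x z
             else orbit_off acc O x y.

Definition MHK (R : realType) (X : finType) (pi : X -> R) (O : X -> {set X}) :=
  orbitK (fun x y => Num.min 1 (pi y / pi x)) O.

Definition BarkerK (R : realType) (X : finType) (pi : X -> R) (O : X -> {set X}) :=
  orbitK (fun x y => pi y / (pi x + pi y)) O.

Definition in_boldG (R : realType) (X : finType) (pi : X -> R) (O : X -> {set X})
  (Q : X -> X -> R) : Prop :=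
  in_S pi Q /\ (forall x y, kmul (kmul (GibbsK pi O) Q) (GibbsK pi O) x y = Q x y).

Definition sandwich (R : realType) (X : finType) (K P : X -> X -> R) : X -> X -> R :=
  kmul (kmul K P) K.

(* Conjugation by the Gibbs orbit kernel G averages over pairs of orbits: if
   f(x, y) only depends on the orbits of x and y, the pi-weighted mean of f under S
   equals its mean under T = G S G.  A kernel Q with G Q G = Q, like T itself, has
   Q(x, y) / pi(y) constant on pairs of orbits, so ln (T / Q) is such an f;
   averaging it turns the cross term sum pi S ln (T / Q) of KL(S || Q) into
   KL(T || Q), which is the Pythagorean identity.  Averaging the indicator of the
   zeros of Q shows that KL(T || Q) = +oo forces KL(S || Q) = +oo.  Minimality and
   uniqueness come from ln u <= u - 1, with equality only at u = 1.  The
   Metropolis-Hastings and Barker orbit kernels K are pi-reversible and only move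
   within orbits, so G K = K G = G and G (K P K) G = G P G. *)

From HB Require Import structures.
From mathcomp Require Import all_boot all_order all_algebra all_fingroup.
From mathcomp Require Import boolp reals ereal exp.
From mathcomp Require Import ring.
Import Order.TTheory GRing.Theory Num.Theory.
Local Open Scope ring_scope.
Set Implicit Arguments. Unset Strict Implicit.

Section Kernels.
Variables (R : realType) (X : finType).
Implicit Types (pi : X -> R) (A B C : X -> X -> R) (f g : X -> X -> R).

Lemma kmulA A B C : kmul (kmul A B) C = kmul A (kmul B C).
Proof.
apply/funext => x; apply/funext => y; rewrite /kmul.
under eq_bigr do rewrite mulr_suml.
rewrite exchange_big; apply: eq_bigr => w _; rewrite mulr_sumr.
by apply: eq_bigr => z _; rewrite mulrA.
Qed.

Lemma kmul_ge0 A B : (forall x y, 0 <= A x y) -> (forall x y, 0 <= B x y) ->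
  forall x y, 0 <= kmul A B x y.
Proof. by move=> A_ge0 B_ge0 x y; apply: sumr_ge0 => z _; apply: mulr_ge0. Qed.

Lemma sandwich_ge0 A B : (forall x y, 0 <= A x y) -> (forall x y, 0 <= B x y) ->
  forall x y, 0 <= sandwich A B x y.
Proof. by move=> A_ge0 B_ge0; apply: kmul_ge0 => //; apply: kmul_ge0. Qed.

Lemma is_transition_kmul A B :
  is_transition A -> is_transition B -> is_transition (kmul A B).
Proof.
move=> [A_ge0 A_row] [B_ge0 B_row]; split; first exact: kmul_ge0.
move=> x; rewrite /kmul exchange_big /= -[RHS](A_row x).
by apply: eq_bigr => z _; rewrite -mulr_sumr B_row mulr1.
Qed.

Lemma in_S_kmul pi A B : in_S pi A -> in_S pi B -> in_S pi (kmul A B).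
Proof.
move=> [A_tr A_stat] [B_tr B_stat]; split; first exact: is_transition_kmul.
move=> y; rewrite /kmul; under eq_bigr do rewrite mulr_sumr.
rewrite exchange_big /= -[RHS]B_stat; apply: eq_bigr => z _.
by rewrite -(A_stat z) mulr_suml; apply: eq_bigr => x _; rewrite mulrA.
Qed.

Definition kexp pi A f : R := \sum_x \sum_y pi x * A x y * f x y.

Definition kmass pi A : R := kexp pi A (fun _ _ => 1).

(* Terms with [A x y = 0] vanish through the factor [A x y], whatever [ln] gives. *)
Definition KLr pi A B : R := kexp pi A (fun x y => ln (A x y / B x y)).

Lemma eq_kexp pi A f g : (forall x y, A x y != 0 -> f x y = g x y) ->
  kexp pi A f = kexp pi A g.
Proof.
move=> efg; apply: eq_bigr => x _; apply: eq_bigr => y _.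
by have [->|/efg->] := eqVneq (A x y) 0; rewrite ?mulr0 ?mul0r.
Qed.

Lemma kexpD pi A f g :
  kexp pi A (fun x y => f x y + g x y) = kexp pi A f + kexp pi A g.
Proof.
rewrite /kexp -big_split; apply: eq_bigr => x _.
by rewrite -big_split; apply: eq_bigr => y _; rewrite mulrDr.
Qed.

Lemma kmass_in_S pi A : \sum_x pi x = 1 -> in_S pi A -> kmass pi A = 1.
Proof.
move=> pi_sum [[_ A_row] _]; rewrite /kmass /kexp -[RHS]pi_sum.
apply: eq_bigr => x _; under eq_bigr do rewrite mulr1.
by rewrite -mulr_sumr A_row mulr1.
Qed.

Lemma psumr2_eq0P f : (forall x y, 0 <= f x y) -> \sum_x \sum_y f x y = 0 ->
  forall x y, f x y = 0.
Proof.
move=> f_ge0 f_sum x.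
have row_eq0 : \sum_y f x y = 0.
  apply: (psumr_eq0P (P := predT) (F := fun x => \sum_y f x y)) => // x' _.
  exact: sumr_ge0.
by move=> y; apply: (psumr_eq0P (P := predT) (F := f x)) => // y' _.
Qed.

End Kernels.

Section LogInequality.
Variable R : realType.
Implicit Types a b u : R.

Lemma ln_le_sub1 u : 0 < u -> ln u <= u - 1.
Proof.
move=> u_gt0; have := @le_ln1Dx R (u - 1).
by rewrite [1 + _]addrC subrK; apply; rewrite ltrBrDr addrC subrr.
Qed.

Lemma ln_lt_sub1 u : 0 < u -> u != 1 -> ln u < u - 1.
Proof.
move=> u_gt0 u_neq1; have := @expR_gt1Dx R (u - 1); rewrite subr_eq0 => /(_ u_neq1).
rewrite [1 + _]addrC subrK => u_lt.
by rewrite -[X in _ < X]expRK ltr_ln // posrE expR_gt0.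
Qed.

Lemma mul_ln_div_sub a b : 0 < a -> 0 < b ->
  a * ln (a / b) - (a - b) = a * (b / a - 1 - ln (b / a)).
Proof.
move=> a_gt0 b_gt0; rewrite -[a / b]invf_div lnV ?posrE ?divr_gt0 //.
by field; rewrite gt_eqF.
Qed.

Lemma sub_le_mul_ln_div a b : 0 <= a -> 0 <= b -> (a != 0 -> b != 0) ->
  a - b <= a * ln (a / b).
Proof.
move=> a_ge0 b_ge0 ab; have [->|a_neq0] := eqVneq a 0.
  by rewrite mul0r sub0r oppr_le0.
have a_gt0 : 0 < a by rewrite lt_def a_neq0.
have b_gt0 : 0 < b by rewrite lt_def ab.
rewrite -subr_ge0 mul_ln_div_sub //; apply: mulr_ge0 (ltW a_gt0) _.
by rewrite subr_ge0; apply/ln_le_sub1/divr_gt0.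
Qed.

Lemma mul_ln_div_eq_sub a b : 0 <= a -> 0 <= b -> (a != 0 -> b != 0) ->
  a * ln (a / b) = a - b -> a = b.
Proof.
move=> a_ge0 b_ge0 ab; have [->|a_neq0] := eqVneq a 0.
  by rewrite mul0r sub0r => /eqP; rewrite eq_sym oppr_eq0 => /eqP.
have a_gt0 : 0 < a by rewrite lt_def a_neq0.
have b_gt0 : 0 < b by rewrite lt_def ab.
move=> /eqP; rewrite -subr_eq0 mul_ln_div_sub // mulf_eq0 (negbTE a_neq0) /=.
rewrite subr_eq0 => /eqP ln_eq.
have [ba1|/(ln_lt_sub1 (divr_gt0 b_gt0 a_gt0))] := eqVneq (b / a) 1.
  by rewrite -[b](divfK a_neq0) ba1 mul1r.
by rewrite ln_eq ltxx.
Qed.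

End LogInequality.

Section KullbackLeibler.
Variables (R : realType) (X : finType) (pi : X -> R).
Hypothesis pi_gt0 : forall x, 0 < pi x.
Implicit Types A B : X -> X -> R.

Lemma KL_fin A B : (forall x y, A x y != 0 -> B x y != 0) ->
  KL pi A B = (KLr pi A B)%:E.
Proof.
move=> AB; rewrite /KL /KLr /kexp -sumEFin; apply: eq_bigr => x _.
rewrite -sumEFin; apply: eq_bigr => y _; rewrite /kl_term.
have [->|Axy] := eqVneq (A x y) 0; first by rewrite mulr0 mul0r.
by rewrite (negbTE (AB x y Axy)).
Qed.

Lemma kl_term_neq_Ny (p q w : R) : kl_term p q w != -oo%E.
Proof. by rewrite /kl_term; case: ifP => _ //; case: ifP. Qed.

Lemma KL_pinfty A B x y : A x y != 0 -> B x y = 0 -> KL pi A B = +oo%E.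
Proof.
move=> Axy Bxy; have row_neqNy x' :
    (\sum_y' kl_term (A x' y') (B x' y') (pi x') != -oo)%E.
  rewrite esum_eqNy; apply/existsP => -[y' /andP[_]].
  by rewrite (negbTE (kl_term_neq_Ny _ _ _)).
apply/esum_eqyP => [x' _|]; first exact: row_neqNy.
exists x; split; rewrite ?mem_index_enum //.
apply/esum_eqyP => [y' _|]; first exact: kl_term_neq_Ny.
by exists y; rewrite mem_index_enum /kl_term (negbTE Axy) Bxy eqxx.
Qed.

Variant KL_spec A B : \bar R -> Prop :=
  | KL_finite of (forall x y, A x y != 0 -> B x y != 0) :
      KL_spec A B (KLr pi A B)%:E
  | KL_infinite x y of A x y != 0 & B x y = 0 : KL_spec A B +oo.

Lemma KLP A B : KL_spec A B (KL pi A B).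
Proof.
case: (boolP [exists x, exists y, (A x y != 0) && (B x y == 0)]).
  move=> /existsP[x /existsP[y /andP[Axy /eqP Bxy]]].
  by rewrite (KL_pinfty Axy Bxy); exact: KL_infinite Axy Bxy.
rewrite negb_exists => /forallP no_charge.
have AB x y : A x y != 0 -> B x y != 0.
  move=> Axy; move: (no_charge x); rewrite negb_exists => /forallP/(_ y).
  by rewrite negb_and negbK (negbTE Axy).
by rewrite KL_fin //; exact: KL_finite.
Qed.

Lemma KLr_sub_kmass A B : KLr pi A B - (kmass pi A - kmass pi B) =
  \sum_x \sum_y pi x * (A x y * ln (A x y / B x y) - (A x y - B x y)).
Proof.
rewrite /KLr /kmass /kexp -!sumrB; apply: eq_bigr => x _.
by rewrite -!sumrB; apply: eq_bigr => y _; ring.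
Qed.

Section Gibbs.
Variables A B : X -> X -> R.
Hypotheses (A_ge0 : forall x y, 0 <= A x y) (B_ge0 : forall x y, 0 <= B x y)
  (AB : forall x y, A x y != 0 -> B x y != 0).

Let KLr_term_ge0 x y :
  0 <= pi x * (A x y * ln (A x y / B x y) - (A x y - B x y)).
Proof.
apply: mulr_ge0 (ltW (pi_gt0 x)) _; rewrite subr_ge0.
exact: (sub_le_mul_ln_div (A_ge0 x y) (B_ge0 x y) (@AB x y)).
Qed.

Lemma KLr_ge_kmass : kmass pi A - kmass pi B <= KLr pi A B.
Proof.
rewrite -subr_ge0 KLr_sub_kmass.
by apply: sumr_ge0 => x _; apply: sumr_ge0 => y _; exact: KLr_term_ge0.
Qed.

Lemma KLr_eq0_eq : kmass pi A = kmass pi B -> KLr pi A B = 0 -> A = B.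
Proof.
move=> mass_eq KLr_eq0; have := KLr_sub_kmass A B.
rewrite mass_eq KLr_eq0 subrr subr0 => /esym/(psumr2_eq0P KLr_term_ge0) term_eq0.
apply/funext => x; apply/funext => y.
apply: (mul_ln_div_eq_sub (A_ge0 x y) (B_ge0 x y) (@AB x y)); apply/eqP.
by rewrite -subr_eq0; move/eqP: (term_eq0 x y); rewrite mulf_eq0 gt_eqF.
Qed.

End Gibbs.

Lemma KL_ge0 A B : (forall x y, 0 <= A x y) -> (forall x y, 0 <= B x y) ->
  kmass pi B <= kmass pi A -> (0 <= KL pi A B)%E.
Proof.
move=> A_ge0 B_ge0 mass_le; case: KLP => [AB|*]; last exact: leey.
by rewrite lee_fin (le_trans _ (KLr_ge_kmass A_ge0 B_ge0 AB)) // subr_ge0.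
Qed.

End KullbackLeibler.

Definition reversible_acceptance (R : realType) (X : finType) (pi : X -> R)
  (acc : X -> X -> R) :=
  [/\ forall x y, 0 <= acc x y, forall x y, acc x y <= 1
    & forall x y, pi x * acc x y = pi y * acc y x].

Section Acceptance.
Variables (R : realType) (X : finType) (pi : X -> R).
Hypothesis pi_gt0 : forall x, 0 < pi x.

Lemma MH_acceptance :
  reversible_acceptance pi (fun x y => Num.min 1 (pi y / pi x)).
Proof.
split=> [x y|x y|x y]; first by rewrite le_min ler01 divr_ge0 ?ltW.
  by rewrite ge_min lexx.
rewrite !minr_pMr ?ltW // !mulr1 mulrCA mulfV ?gt_eqF // mulr1.
by rewrite [pi y * (pi x / _)]mulrCA mulfV ?gt_eqF // mulr1 minC.
Qed.

Lemma Barker_acceptance :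
  reversible_acceptance pi (fun x y => pi y / (pi x + pi y)).
Proof.
have sum_gt0 x y : 0 < pi x + pi y by rewrite addr_gt0.
split=> [x y|x y|x y]; first by rewrite divr_ge0 ?ltW.
  by rewrite ler_pdivrMr // mul1r lerDr ltW.
by rewrite [pi y + pi x]addrC mulrCA.
Qed.

End Acceptance.

Section OrbitPartition.
Variables (R : realType) (X : finType) (pi : X -> R) (O : X -> {set X}).
Hypotheses (pi_gt0 : forall x, 0 < pi x) (O_refl : forall x, x \in O x)
  (O_eq : forall {x y}, y \in O x -> O y = O x).
Local Notation G := (GibbsK pi O).
Implicit Types (A S Q T : X -> X -> R) (f : X -> X -> R).

Lemma mem_O_sym x y : (y \in O x) = (x \in O y).
Proof. by apply/idP/idP => h; rewrite (O_eq h) O_refl. Qed.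

Lemma pimass_gt0 x : 0 < pimass pi (O x).
Proof.
rewrite /pimass (bigD1 x) ?O_refl //= ltr_pwDl //.
by apply: sumr_ge0 => z _; exact: ltW.
Qed.

Lemma GibbsK_ge0 x y : 0 <= G x y.
Proof.
by rewrite /GibbsK; case: ifP => // _; rewrite divr_ge0 ?ltW ?pimass_gt0.
Qed.

Lemma GibbsK_diag_gt0 x : 0 < G x x.
Proof. by rewrite /GibbsK O_refl divr_gt0 ?pimass_gt0. Qed.

Lemma GibbsK_neq0 x y : G x y != 0 -> y \in O x.
Proof. by rewrite /GibbsK; case: ifP => // _; rewrite eqxx. Qed.

Lemma GibbsK_orbit x x' : x' \in O x -> G x' = G x.
Proof. by move=> xx'; apply/funext => y; rewrite /GibbsK (O_eq xx'). Qed.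

Lemma GibbsK_row x : \sum_y G x y = 1.
Proof.
rewrite /GibbsK -big_mkcond /= -mulr_suml -/(pimass pi (O x)).
by rewrite mulfV // gt_eqF ?pimass_gt0.
Qed.

Lemma GibbsK_stat y : \sum_x pi x * G x y = pi y.
Proof.
transitivity (\sum_(x in O y) pi x * (pi y / pimass pi (O y))).
  rewrite [RHS]big_mkcond /=; apply: eq_bigr => x _; rewrite /GibbsK mem_O_sym.
  by case: ifP => [/O_eq ->|]; rewrite ?mulr0.
rewrite -mulr_suml -/(pimass pi (O y)) mulrC -mulrA mulVf ?mulr1 //.
by rewrite gt_eqF ?pimass_gt0.
Qed.

Lemma GibbsK_in_S : in_S pi G.
Proof.
split; last exact: GibbsK_stat.
by split; [exact: GibbsK_ge0 | exact: GibbsK_row].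
Qed.

Lemma GibbsK_idem : kmul G G = G.
Proof.
apply/funext => x; apply/funext => y.
rewrite /kmul (eq_bigr (fun z => G x z * G x y)).
  by rewrite -mulr_suml GibbsK_row mul1r.
move=> z _; have [->|/GibbsK_neq0 xz] := eqVneq (G x z) 0; first by rewrite !mul0r.
by rewrite (GibbsK_orbit xz).
Qed.

Definition orbit_invariant f :=
  forall x x' y y', x' \in O x -> y' \in O y -> f x' y' = f x y.

(* [T x y / pi y] only depends on the orbits of [x] and [y]. *)
Definition orbit_lifted T :=
  forall x x' y y', x' \in O x -> y' \in O y -> T x' y' * pi y = T x y * pi y'.

Lemma kexp_kmulG A f : orbit_invariant f -> kexp pi (kmul A G) f = kexp pi A f.
Proof.
move=> f_inv; apply: eq_bigr => x _; rewrite /kmul.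
under eq_bigr do rewrite mulr_sumr mulr_suml.
rewrite exchange_big /=; apply: eq_bigr => z _.
rewrite (eq_bigr (fun y => pi x * A x z * f x z * G z y)).
  by rewrite -mulr_sumr GibbsK_row mulr1.
move=> y _; have [->|/GibbsK_neq0 zy] := eqVneq (G z y) 0.
  by rewrite !(mul0r, mulr0).
by rewrite mulrA mulrAC (f_inv x x z y).
Qed.

Lemma kexp_Gkmul A f : orbit_invariant f -> kexp pi (kmul G A) f = kexp pi A f.
Proof.
move=> f_inv; rewrite /kexp /kmul.
under eq_bigr do under eq_bigr do rewrite mulr_sumr mulr_suml.
under eq_bigr do rewrite exchange_big.
rewrite exchange_big /=; apply: eq_bigr => z _.
rewrite exchange_big /=; apply: eq_bigr => y _.
rewrite (eq_bigr (fun x => pi x * G x z * (A z y * f z y))).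
  by rewrite -mulr_suml GibbsK_stat mulrA.
move=> x _; have [->|/GibbsK_neq0 xz] := eqVneq (G x z) 0.
  by rewrite !(mul0r, mulr0).
by rewrite !mulrA (f_inv z x y y) // -mem_O_sym.
Qed.

Lemma kexp_sandwich A f :
  orbit_invariant f -> kexp pi (sandwich G A) f = kexp pi A f.
Proof. by move=> f_inv; rewrite /sandwich kexp_kmulG // kexp_Gkmul. Qed.

Lemma kmass_sandwich A : kmass pi (sandwich G A) = kmass pi A.
Proof. exact: kexp_sandwich. Qed.

Lemma sandwich_lifted A : orbit_lifted (sandwich G A).
Proof.
move=> x x' y y' xx' yy'; rewrite /sandwich /kmul (GibbsK_orbit xx') !mulr_suml.
apply: eq_bigr => z _; rewrite -!mulrA; congr (_ * _); rewrite /GibbsK.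
have -> : (y' \in O z) = (y \in O z) by rewrite mem_O_sym (O_eq yy') -mem_O_sym.
case: ifP => _; last by rewrite !mul0r.
by rewrite mulrAC [RHS]mulrAC (mulrC (pi y)).
Qed.

Lemma lifted_eq0 T x x' y y' : orbit_lifted T -> x' \in O x -> y' \in O y ->
  (T x' y' == 0) = (T x y == 0).
Proof.
move=> T_lift xx' yy'; have pi_neq0 z : (pi z == 0) = false by rewrite gt_eqF.
rewrite -[LHS]orbF -(pi_neq0 y) -mulf_eq0 (T_lift x x' y y' xx' yy').
by rewrite mulf_eq0 pi_neq0 orbF.
Qed.

Lemma lifted_ratio_invariant T Q : orbit_lifted T -> orbit_lifted Q ->
  orbit_invariant (fun x y => T x y / Q x y).
Proof.
move=> T_lift Q_lift x x' y y' xx' yy' /=.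
have scale A : orbit_lifted A -> A x' y' = A x y * (pi y' / pi y).
  by move=> A_lift; rewrite mulrA -(A_lift x x' y y' xx' yy') mulfK // gt_eqF.
rewrite (scale T T_lift) (scale Q Q_lift) invfM mulrACA divff ?mulr1 //.
by rewrite mulf_neq0 ?invr_eq0 ?gt_eqF.
Qed.

Lemma sandwich_neq0 A x y : (forall x y, 0 <= A x y) -> A x y != 0 ->
  sandwich G A x y != 0.
Proof.
move=> A_ge0 Axy; have GA_ge0 := kmul_ge0 GibbsK_ge0 A_ge0.
have GA_gt0 : 0 < kmul G A x y.
  rewrite lt_def GA_ge0 andbT psumr_neq0 => [|z _]; last first.
    exact: mulr_ge0 (GibbsK_ge0 _ _) (A_ge0 _ _).
  apply/hasP; exists x; first exact: mem_index_enum.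
  by rewrite mulr_gt0 ?GibbsK_diag_gt0 // lt_def Axy A_ge0.
rewrite psumr_neq0 => [|z _]; last exact: mulr_ge0 (GA_ge0 _ _) (GibbsK_ge0 _ _).
apply/hasP; exists y; first exact: mem_index_enum.
by rewrite mulr_gt0 ?GibbsK_diag_gt0.
Qed.

Lemma sandwich_idem A : sandwich G (sandwich G A) = sandwich G A.
Proof. by rewrite /sandwich -!kmulA GibbsK_idem kmulA GibbsK_idem. Qed.

Lemma sandwich_in_boldG A : in_S pi A -> in_boldG pi O (sandwich G A).
Proof.
move=> A_in; have G_in := GibbsK_in_S.
split; first by apply: in_S_kmul => //; apply: in_S_kmul.
by move=> x y; rewrite -[LHS]/(sandwich G (sandwich G A) x y) sandwich_idem.
Qed.

Lemma in_boldG_sandwich Q : in_boldG pi O Q -> sandwich G Q = Q.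
Proof. by case=> _ GQG; apply/funext => x; apply/funext => y; exact: GQG. Qed.

Lemma PiK_in_boldG : \sum_x pi x = 1 -> in_boldG pi O (PiK pi).
Proof.
move=> pi_sum; have GPi : kmul G (PiK pi) = PiK pi.
  apply/funext => x; apply/funext => y.
  by rewrite /kmul -mulr_suml GibbsK_row mul1r.
have PiG : kmul (PiK pi) G = PiK pi.
  by apply/funext => x; apply/funext => y; rewrite /kmul GibbsK_stat.
split; last by move=> x y; rewrite GPi PiG.
split; last by move=> y; rewrite /PiK -mulr_suml pi_sum mul1r.
by split=> [x y|x]; rewrite /PiK ?pi_sum // ltW.
Qed.

Section OrbitKernel.
Variable acc : X -> X -> R.
Hypothesis acc_rev : reversible_acceptance pi acc.
Local Notation K := (orbitK acc O).
Local Notation off := (orbit_off acc O).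

Lemma orbit_off_ge0 x y : 0 <= off x y.
Proof.
have [acc_ge0 _ _] := acc_rev.
by rewrite /orbit_off; case: ifP => // _; rewrite mulr_ge0 ?invr_ge0 ?ler0n.
Qed.

Lemma orbit_off_sum_le1 x : \sum_(z | z != x) off x z <= 1.
Proof.
have [_ acc_le1 _] := acc_rev.
set c : R := (#|O x|.-1)%:R^-1; have c_ge0 : 0 <= c by rewrite invr_ge0 ler0n.
apply: (@le_trans _ _ (\sum_(z | z != x) (if z \in O x then c else 0))).
  apply: ler_sum => z z_neq; rewrite /orbit_off z_neq andbT.
  by case: ifP => // _; rewrite -[leRHS]mulr1 ler_wpM2l.
rewrite -big_mkcondr /= sumr_const.
have -> : #|[pred z | (z != x) && (z \in O x)]| = #|O x|.-1.
  rewrite (cardD1 x (O x)) O_refl add1n -pred_Sn.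
  by apply: eq_card => z; rewrite !inE.
rewrite /c; case: (#|O x|.-1) => [|n]; first by rewrite mulr0n ler01.
by rewrite -[X in X <= _]mulr_natr mulVf // pnatr_eq0.
Qed.

Lemma orbitK_ge0 x y : 0 <= K x y.
Proof.
rewrite /orbitK; case: ifP => _; last exact: orbit_off_ge0.
by rewrite subr_ge0 orbit_off_sum_le1.
Qed.

Lemma orbitK_row x : \sum_y K x y = 1.
Proof.
rewrite (bigD1 x) //= {1}/orbitK eqxx (eq_bigr (off x)) ?subrK //.
by move=> y y_neq; rewrite /orbitK (negbTE y_neq).
Qed.

Lemma orbitK_neq0 x y : K x y != 0 -> y \in O x.
Proof.
rewrite /orbitK; case: ifP => [/eqP -> _|_]; first exact: O_refl.
by rewrite /orbit_off; case: ifP => [/andP[] //|_]; rewrite eqxx.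
Qed.

Lemma orbit_off_rev x y : pi x * off x y = pi y * off y x.
Proof.
have [_ _ acc_sym] := acc_rev.
rewrite /orbit_off mem_O_sym eq_sym.
case: ifP => [/andP[yx _]|_]; last by rewrite !mulr0.
by rewrite (O_eq yx) mulrCA acc_sym mulrCA.
Qed.

Lemma orbitK_stat y : \sum_x pi x * K x y = pi y.
Proof.
rewrite (bigD1 y) //= {1}/orbitK eqxx.
rewrite [X in _ + X](eq_bigr (fun x => pi y * off y x)).
  by rewrite -mulr_sumr -mulrDr subrK mulr1.
by move=> x x_neq; rewrite /orbitK eq_sym (negbTE x_neq) orbit_off_rev.
Qed.

Lemma orbitK_mem x y z : K z y != 0 -> (z \in O x) = (y \in O x).
Proof. by move/orbitK_neq0 => zy; rewrite mem_O_sym -(O_eq zy) -mem_O_sym. Qed.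

Lemma GibbsK_orbitK : kmul G K = G.
Proof.
apply/funext => x; apply/funext => y.
rewrite /kmul (eq_bigr (fun z => pi z * K z y *
    (if y \in O x then (pimass pi (O x))^-1 else 0))).
  by rewrite -mulr_suml orbitK_stat /GibbsK; case: ifP => _; rewrite ?mulr0.
move=> z _; have [->|Kzy] := eqVneq (K z y) 0; first by rewrite !(mulr0, mul0r).
by rewrite /GibbsK (orbitK_mem x Kzy); case: ifP => _; ring.
Qed.

Lemma orbitK_GibbsK : kmul K G = G.
Proof.
apply/funext => x; apply/funext => y.
rewrite /kmul (eq_bigr (fun z => K x z * G x y)).
  by rewrite -mulr_suml orbitK_row mul1r.
move=> z _; have [->|/orbitK_neq0 xz] := eqVneq (K x z) 0; first by rewrite !mul0r.
by rewrite (GibbsK_orbit xz).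
Qed.

Lemma sandwich_orbitK A : sandwich G (sandwich K A) = sandwich G A.
Proof. by rewrite /sandwich -!kmulA GibbsK_orbitK kmulA orbitK_GibbsK. Qed.

End OrbitKernel.

Section Projection.
Variables S Q : X -> X -> R.
Hypotheses (S_ge0 : forall x y, 0 <= S x y) (Q_ge0 : forall x y, 0 <= Q x y)
  (GQG : sandwich G Q = Q).
Local Notation T := (sandwich G S).

Let T_ge0 : forall x y, 0 <= T x y := sandwich_ge0 GibbsK_ge0 S_ge0.

Let Q_lifted : orbit_lifted Q.
Proof. by rewrite -GQG; exact: sandwich_lifted. Qed.

Lemma sandwich_supp_sub : (forall x y, S x y != 0 -> Q x y != 0) ->
  forall x y, T x y != 0 -> Q x y != 0.
Proof.
move=> SQ x y Txy; apply/eqP => Qxy.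
(* S and T give the same mass to the zeros of Q, a union of orbit pairs. *)
pose zQ x y : R := (Q x y == 0)%:R.
have zQ_inv : orbit_invariant zQ.
  by move=> x1 x' y1 y' xx' yy'; rewrite /zQ (lifted_eq0 Q_lifted xx' yy').
have S_zQ : kexp pi S zQ = 0.
  apply: big1 => x1 _; apply: big1 => y1 _; rewrite /zQ.
  by have [->|/SQ/negbTE->] := eqVneq (S x1 y1) 0; rewrite ?mulr0 ?mul0r.
have zQ_ge0 x1 y1 : 0 <= pi x1 * T x1 y1 * zQ x1 y1.
  by rewrite mulr_ge0 ?ler0n // mulr_ge0 // ltW.
have := psumr2_eq0P zQ_ge0; rewrite -/(kexp pi T zQ) kexp_sandwich // S_zQ.
move=> /(_ erefl x y); rewrite /zQ Qxy eqxx mulr1 => /eqP.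
by rewrite mulf_eq0 gt_eqF //= (negbTE Txy).
Qed.

Lemma KL_sandwich_fin : KL pi S T = (KLr pi S T)%:E.
Proof. by apply: KL_fin => x y; exact: sandwich_neq0. Qed.

Lemma KLr_pythagoras : (forall x y, T x y != 0 -> Q x y != 0) ->
  KLr pi S Q = KLr pi S T + KLr pi T Q.
Proof.
move=> TQ; have ratio_inv : orbit_invariant (fun x y => ln (T x y / Q x y)).
  move=> x x' y y' xx' yy'; congr ln.
  exact: (lifted_ratio_invariant (sandwich_lifted S) Q_lifted xx' yy').
rewrite [KLr pi T Q]/KLr kexp_sandwich // /KLr -kexpD.
apply: eq_kexp => x y Sxy; have Txy := sandwich_neq0 S_ge0 Sxy.
have S_pos : S x y \is Num.pos by rewrite posrE lt_def Sxy S_ge0.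
have T_pos : T x y \is Num.pos by rewrite posrE lt_def Txy T_ge0.
have Q_pos : Q x y \is Num.pos by rewrite posrE lt_def TQ ?Q_ge0.
rewrite (ln_div S_pos Q_pos) (ln_div S_pos T_pos) (ln_div T_pos Q_pos).
by rewrite addrA subrK.
Qed.

Lemma KL_pythagoras : KL pi S Q = (KL pi S T + KL pi T Q)%E.
Proof.
rewrite KL_sandwich_fin; case: (KLP pi T Q) => [TQ|x y Txy Qxy].
  by rewrite KL_fin ?KLr_pythagoras // => x y /(sandwich_neq0 S_ge0)/TQ.
rewrite addey //; case: (KLP pi S Q) => // SQ.
by have := sandwich_supp_sub SQ Txy; rewrite Qxy eqxx.
Qed.

Lemma KL_sandwich_le : kmass pi T = kmass pi Q -> (KL pi S T <= KL pi S Q)%E.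
Proof.
move=> mass_eq; rewrite KL_pythagoras leeDl //.
by apply: KL_ge0 => //; rewrite mass_eq.
Qed.

Lemma KL_sandwich_uniq : kmass pi T = kmass pi Q -> KL pi S Q = KL pi S T -> Q = T.
Proof.
move=> mass_eq; rewrite KL_pythagoras KL_sandwich_fin.
case: (KLP pi T Q) => [TQ [sum_eq]|x y _ _]; last by rewrite addey.
have KLr_eq0 : KLr pi T Q = 0 by apply: (addrI (KLr pi S T)); rewrite addr0.
by rewrite (KLr_eq0_eq pi_gt0 T_ge0 Q_ge0 TQ mass_eq KLr_eq0).
Qed.

Lemma KL_le_sandwich : (KL pi T Q <= KL pi S Q)%E.
Proof.
rewrite KL_pythagoras leeDr //.
by apply: KL_ge0 => //; rewrite kmass_sandwich.
Qed.

End Projection.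

Lemma KL_projection S T : \sum_x pi x = 1 -> (forall x y, 0 <= S x y) ->
  sandwich G S = T -> in_S pi T -> forall Q, in_boldG pi O Q ->
  [/\ KL pi S Q = (KL pi S T + KL pi T Q)%E, (KL pi S T <= KL pi S Q)%E,
      (KL pi S Q = KL pi S T -> Q = T) & (KL pi T Q <= KL pi S Q)%E].
Proof.
move=> pi_sum S_ge0 <- T_in Q Q_boldG; have [[[Q_ge0 _] _] _] := Q_boldG.
have GQG := in_boldG_sandwich Q_boldG.
have mass_eq : kmass pi (sandwich G S) = kmass pi Q.
  by rewrite !kmass_in_S //; case: Q_boldG.
split; [exact: KL_pythagoras | exact: KL_sandwich_le
       | exact: KL_sandwich_uniq | exact: KL_le_sandwich].
Qed.

End OrbitPartition.

Unset Implicit Arguments. Set Strict Implicit.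

Theorem proposition5p3 (R : realType) (X : finType) (gT : finGroupType)
  (H : {group gT}) (to : {action gT &-> X}) (pi : X -> R)
  (hpos : forall x, 0 < pi x) (hsum : \sum_(x : X) pi x = 1)
  (P : X -> X -> R) (hP : in_S pi P) :
  let O := fun x : X => orbit to H x in
  let G := GibbsK pi O in
  let M := MHK pi O in
  let B := BarkerK pi O in
  let GPG := sandwich G P in
  let MPM := sandwich M P in
  let BPB := sandwich B P in
  ((forall Q, in_boldG pi O Q ->
         KL pi P Q = (KL pi P GPG + KL pi GPG Q)%E) /\
      in_boldG pi O GPG /\
      (forall Q, in_boldG pi O Q -> (KL pi P GPG <= KL pi P Q)%E) /\
      (forall Q, in_boldG pi O Q -> KL pi P Q = KL pi P GPG ->
         forall x y, Q x y = GPG x y) /\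
      (forall Q, in_boldG pi O Q ->
         KL pi MPM Q = (KL pi MPM GPG + KL pi GPG Q)%E) /\
      (forall Q, in_boldG pi O Q ->
         KL pi BPB Q = (KL pi BPB GPG + KL pi GPG Q)%E) /\
      (forall Q, in_boldG pi O Q -> (KL pi MPM GPG <= KL pi MPM Q)%E /\
         (KL pi MPM Q = KL pi MPM GPG -> forall x y, Q x y = GPG x y)) /\
      (forall Q, in_boldG pi O Q -> (KL pi BPB GPG <= KL pi BPB Q)%E /\
         (KL pi BPB Q = KL pi BPB GPG -> forall x y, Q x y = GPG x y)) /\
      [/\ (KL pi GPG (PiK pi) <= KL pi P (PiK pi))%E,
          (KL pi GPG (PiK pi) <= KL pi MPM (PiK pi))%E &
          (KL pi GPG (PiK pi) <= KL pi BPB (PiK pi))%E]).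
Proof.
move=> O G M B GPG MPM BPB.
have O_refl x : x \in O x by exact: orbit_refl.
have O_eq x y : y \in O x -> O y = O x by move/orbit_eqP.
have P_ge0 : forall x y, 0 <= P x y by case: hP => [[]].
have GPG_boldG : in_boldG pi O GPG := sandwich_in_boldG hpos O_refl O_eq hP.
have [MH_acc Barker_acc] := (MH_acceptance hpos, Barker_acceptance hpos).
have proj := KL_projection hpos O_refl O_eq hsum.
have projP := proj _ _ P_ge0 erefl GPG_boldG.1.
have projM := proj _ _ (sandwich_ge0 (orbitK_ge0 O_refl MH_acc) P_ge0)
  (sandwich_orbitK O_refl O_eq MH_acc P) GPG_boldG.1.
have projB := proj _ _ (sandwich_ge0 (orbitK_ge0 O_refl Barker_acc) P_ge0)
  (sandwich_orbitK O_refl O_eq Barker_acc P) GPG_boldG.1.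
have Pi_boldG := PiK_in_boldG hpos O_refl O_eq hsum.
split; first by move=> Q /projP[].
split; first exact: GPG_boldG.
split; first by move=> Q /projP[].
split; first by move=> Q /projP[_ _ uniq _] /uniq ->.
split; first by move=> Q /projM[].
split; first by move=> Q /projB[].
split; first by move=> Q /projM[_ ? uniq _]; split=> // /uniq ->.
split; first by move=> Q /projB[_ ? uniq _]; split=> // /uniq ->.
by split; [case: (projP _ Pi_boldG) | case: (projM _ Pi_boldG)
          | case: (projB _ Pi_boldG)].
Qed.
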